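(* Let $B$ be a connected finite dimensional symmetric $\Bbbk$-algebra and let $A$ be the trivial extension of $B$ by the $B$-$B$-bimodule $B$. Then the $A$-$A$-bimodule $A\otimes_BA$ is indecomposable; in fact its endomorphism algebra is local.
   Context: $\Bbbk$ is an algebraically closed field. The trivial extension $A$ of $B$ by a $B$-$B$-bimodule $M$ is the algebra of matrices $\begin{pmatrix}b&m\\0&b\end{pmatrix}$, $b\in B$, $m\in M$, with matrix multiplication; here $M=B$ (which is isomorphic to $B^*=\mathrm{Hom}_\Bbbk(B,\Bbbk)$ since $B$ is symmetric). $B$ is regarded as the subalgebra of diagonal matrices. *)

From HB Require Import structures.
From mathcomp Require Import all_boot all_order all_algebra falgebra.
Set Implicit Arguments. Unset Strict Implicit. Unset Printing Implicit Defensive.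
Import GRing.Theory.
Local Open Scope ring_scope.

Section TrivExt.
Variables (K : fieldType) (B : falgType K).

(* B is symmetric: it carries a symmetrizing form, i.e. a linear form
   lam : B -> K with lam (x y) = lam (y x) whose associated bilinear form
   (x, y) |-> lam (x y) is nondegenerate (equivalently B ~ B^* as bimodules). *)
Definition symmetric_falg : Prop :=
  exists lam : {linear B -> K^o},
    (forall x y : B, lam (x * y) = lam (y * x)) /\
    (forall x : B, (forall y : B, lam (x * y) = 0) -> x = 0).

(* B is connected: B <> 0 (automatic for falgType) and its only central
   idempotents are 0 and 1. *)
Definition connected_falg : Prop :=
  forall e : B, e * e = e -> (forall x : B, e * x = x * e) -> e = 0 \/ e = 1.

(* An element (b, m) stands for the matrix [[b, m], [0, b]]. *)
Definition TE : vectType K := (B * B)%type.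
Definition te_mul (x y : TE) : TE := (x.1 * y.1, x.1 * y.2 + x.2 * y.1).
Definition te_inB (b : B) : TE := (b, 0).

Definition dA : nat := \dim (fullv : {vspace TE}).
Definition basA : dA.-tuple TE := vbasis fullv.

Definition crd (x : TE) : 'rV[K]_dA := \row_(i < dA) coord basA i x.
Definition uncrd (r : 'rV[K]_dA) : TE := \sum_(i < dA) r 0 i *: basA`_i.

(* ---------- A (x)_K A, realised as 'rV_(dA*dA) via coordinates ---------- *)
Definition TT : vectType K := 'rV[K]_(dA * dA).
Definition tens (x y : TE) : TT := mxvec ((crd x)^T *m crd y).

Definition lmx (a : TE) : 'M[K]_dA := lin1_mx (fun r => crd (te_mul a (uncrd r))).
Definition rmx (c : TE) : 'M[K]_dA := lin1_mx (fun r => crd (te_mul (uncrd r) c)).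

(* left action a.(x (x) y) = (a x) (x) y, right action (x (x) y).c = x (x) (y c) *)
Definition lact (a : TE) (v : TT) : TT := mxvec ((lmx a)^T *m vec_mx v).
Definition ract (c : TE) (v : TT) : TT := mxvec (vec_mx v *m rmx c).

(* the balancing subspace N, spanned by x b (x) y - x (x) b y, x,y in A, b in B
   (it suffices to let x, y, b range over bases) *)
Definition balanced_gens : seq TT :=
  flatten [seq flatten [seq [seq tens (te_mul x (te_inB b)) y
                                  - tens x (te_mul (te_inB b) y)
                             | y <- basA]
                       | b <- vbasis (fullv : {vspace B})]
          | x <- basA].
Definition NB : {vspace TT} := <<balanced_gens>>%VS.
(* A (x)_B A is the quotient TT / NB, with the induced A-A-bimodule structure. *)

(* sub-bimodules of TT/NB correspond to subspaces U >= NB stable by the actions *)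
Definition sub_bimod (U : {vspace TT}) : Prop :=
  (NB <= U)%VS /\
  (forall a v, v \in U -> lact a v \in U) /\
  (forall c v, v \in U -> ract c v \in U).

Definition tensor_indecomposable : Prop :=
  NB != fullv /\
  forall U W : {vspace TT}, sub_bimod U -> sub_bimod W ->
    (U + W)%VS = fullv -> (U :&: W)%VS = NB -> U = NB \/ W = NB.

(* linear maps f of TT inducing an A-A-bimodule endomorphism of TT/NB;
   End_{A-A}(A (x)_B A) = {such f} / {f with image in NB} *)
Definition bimod_endo (f : 'End(TT)) : Prop :=
  (f @: NB <= NB)%VS /\
  (forall a v, f (lact a v) - lact a (f v) \in NB) /\
  (forall c v, f (ract c v) - ract c (f v) \in NB).

Definition endo_null (f : 'End(TT)) : Prop := (limg f <= NB)%VS.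

Definition endo_unit (f : 'End(TT)) : Prop :=
  exists g : 'End(TT), bimod_endo g /\
    endo_null ((f \o g)%VF - \1%VF) /\ endo_null ((g \o f)%VF - \1%VF).

Definition tensor_End_local : Prop :=
  ~ endo_null \1%VF /\
  forall f : 'End(TT), bimod_endo f -> endo_unit f \/ endo_unit (\1%VF - f).

End TrivExt.

From HB Require Import structures.
From mathcomp Require Import all_boot all_order all_algebra falgebra.
From mathcomp Require Import ring.
From Stdlib Require Import Classical.
Set Implicit Arguments. Unset Strict Implicit. Unset Printing Implicit Defensive.
Import GRing.Theory.
Local Open Scope ring_scope.

(* Write A = B + B eps with eps^2 = 0. As a left A-module, A (x)_B A is free on 1 (x) 1 and
   1 (x) eps, which identifies it with the trivial extension Q = A |x A; A acts on the left
   through a |-> (a, 0) and on the right through the ring map lifting y1 + y2 eps to (y1, y2).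
   A bimodule endomorphism f is then multiplication by z = f(1 (x) 1), and z must be central
   in Q, so all four of its B-components are central in B. Since B is connected, its centre is
   local (Fitting's lemma turns a central element into a central idempotent), and z is
   invertible in Q as soon as its first B-component is invertible. Hence End(A (x)_B A) is
   local, and the projection attached to a decomposition shows that A (x)_B A is
   indecomposable. *)

(* [dual R] is R[d]/(d^2), the trivial extension of R by itself: [TE B] is [dual B] and the
   model Q above is [dual (dual B)]. Its ring structure lives on the alias only: a bare pair
   or [1] of type [R * R] gets the componentwise ring structure of the product. *)
Definition dual (R : Type) : Type := (R * R)%type.

HB.instance Definition _ (V : zmodType) := GRing.Zmodule.copy (dual V) (V * V)%type.
HB.instance Definition _ (K : pzRingType) (V : lmodType K) :=
  GRing.Lmodule.copy (dual V) (V * V)%type.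

Definition dual_const (V : zmodType) (r : V) : dual V := (r, 0).
Definition dual_lift (V : zmodType) (x : dual V) : dual (dual V) :=
  (dual_const x.1, dual_const x.2).

Section DualRing.
Variable R : nzRingType.
Implicit Types (r s : R) (x y : dual R).

Definition dual_mul x y : dual R := (x.1 * y.1, x.1 * y.2 + x.2 * y.1).
Definition dual_one : dual R := (1, 0).

Lemma dual_mulA : associative dual_mul.
Proof.
move=> [a m] [b n] [c p]; apply: (congr2 pair); rewrite /= ?mulrA //.
by rewrite !mulrDl !mulrDr !mulrA addrA.
Qed.
Lemma dual_mul1r : left_id dual_one dual_mul.
Proof. by move=> [a m]; apply: (congr2 pair); rewrite /= ?mul1r ?mul0r ?addr0. Qed.
Lemma dual_mulr1 : right_id dual_one dual_mul.
Proof. by move=> [a m]; apply: (congr2 pair); rewrite /= ?mulr1 ?mulr0 ?add0r. Qed.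
Lemma dual_mulDl : left_distributive dual_mul +%R.
Proof. by move=> [a m] [b n] [c p]; apply: (congr2 pair); rewrite /= !mulrDl // addrACA. Qed.
Lemma dual_mulDr : right_distributive dual_mul +%R.
Proof. by move=> [a m] [b n] [c p]; apply: (congr2 pair); rewrite /= !mulrDr // addrACA. Qed.
Lemma dual_one_neq0 : dual_one != 0.
Proof. by apply/eqP => -[/eqP]; rewrite oner_eq0. Qed.

HB.instance Definition _ := GRing.Zmodule_isNzRing.Build (dual R)
  dual_mulA dual_mul1r dual_mulr1 dual_mulDl dual_mulDr dual_one_neq0.

Lemma dual_constM r s : dual_const (r * s) = dual_const r * dual_const s.
Proof. by apply: (congr2 pair); rewrite /= ?mulr0 ?mul0r ?addr0. Qed.

Lemma dual_const_mulE r x : dual_const r * x = (r * x.1, r * x.2).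
Proof. by apply: (congr2 pair); rewrite /= ?mul0r ?addr0. Qed.

Lemma dual_mul_constE x r : x * dual_const r = (x.1 * r, x.2 * r).
Proof. by apply: (congr2 pair); rewrite /= ?mulr0 ?add0r. Qed.

Lemma dual_lift_const r : dual_lift (dual_const r) = dual_const (dual_const r).
Proof. by []. Qed.

Lemma dual_comm_const x r :
  GRing.comm x (dual_const r) <-> GRing.comm x.1 r /\ GRing.comm x.2 r.
Proof.
rewrite /GRing.comm dual_mul_constE dual_const_mulE.
by split=> [[-> ->] | [-> ->]].
Qed.

Lemma dual_central r s : (forall t, GRing.comm r t) -> (forall t, GRing.comm s t) ->
  forall x : dual R, GRing.comm ((r, s) : dual R) x.
Proof.
move=> cr cs [a m]; apply: (congr2 pair); rewrite /= ?cr //.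
by rewrite cs addrC.
Qed.

Lemma dual_invertible x : (exists y : R, y * x.1 = 1 /\ x.1 * y = 1) ->
  exists y : dual R, y * x = 1 /\ x * y = 1.
Proof.
case: x => u m [v [vu uv]]; exists (v, - (v * m * v)).
rewrite /= in vu uv; split; apply: (congr2 pair) => //=.
  by rewrite mulNr -!mulrA vu mulr1 addrN.
by rewrite mulrN !mulrA uv mul1r addNr.
Qed.

End DualRing.

Lemma dual_liftM (R : nzRingType) (x y : dual R) :
  dual_lift (x * y) = dual_lift x * dual_lift y.
Proof.
case: x y => [a m] [b n]; apply: (congr2 pair) => /=.
  exact: dual_constM.
by rewrite -!dual_constM; apply: (congr2 pair); rewrite /= ?addr0.
Qed.

Section DualAlgebra.
Variable K : pzRingType.

Lemma dual_scalerAl (R : lalgType K) (a : K) (x y : dual R) :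
  a *: (x * y) = (a *: x : dual R) * y.
Proof.
by case: x y => [u m] [v n]; apply: (congr2 pair); rewrite /= ?scalerDr !scalerAl.
Qed.
HB.instance Definition _ (R : lalgType K) :=
  GRing.Lmodule_isLalgebra.Build K (dual R) (@dual_scalerAl R).

Lemma dual_scalerAr (R : algType K) (a : K) (x y : dual R) :
  a *: (x * y) = x * (a *: y : dual R).
Proof.
by case: x y => [u m] [v n]; apply: (congr2 pair); rewrite /= ?scalerDr !scalerAr.
Qed.
HB.instance Definition _ (R : algType K) :=
  GRing.Lalgebra_isAlgebra.Build K (dual R) (@dual_scalerAr R).

Lemma dual_const_is_linear (R : lmodType K) : linear (@dual_const R).
Proof. by move=> a r s; apply: (congr2 pair); rewrite /= ?scaler0 ?addr0. Qed.
HB.instance Definition _ (R : lmodType K) :=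
  GRing.isLinear.Build K R (dual R) *:%R (@dual_const R) (@dual_const_is_linear R).

End DualAlgebra.

Section CentralLocal.
Variables (K : fieldType) (B : falgType K).

Lemma annihilating_poly (p : B) : exists2 P : {poly K}, P != 0 & horner_alg p P = 0.
Proof.
pose n : nat := \dim {:B}; pose X := [tuple p ^+ i | i < n.+1].
have notfreeX : ~~ free X.
  by apply/negP => /eqP dimX; have := dimvS (subvf <<X>>); rewrite dimX size_tuple ltnn.
apply: NNPP => noP; apply: (negP notfreeX); apply/freeP => k sumX0 i.
apply: NNPP => ki0; apply: noP; exists (\poly_(j < n.+1) k (inord j)).
  apply/eqP => /(congr1 (coefp i)); rewrite /= coef_poly ltn_ord inord_val coef0.
  exact: ki0.
rewrite poly_def rmorph_sum -[RHS]sumX0; apply: eq_bigr => j _.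
rewrite -mul_polyC rmorphM rmorphXn /= horner_algC horner_algX mulr_algl.
by rewrite inord_val (nth_map ord0) ?size_enum_ord // nth_ord_enum.
Qed.

Lemma comm_horner_alg (x p : B) P : GRing.comm x p -> GRing.comm x (horner_alg p P).
Proof.
move=> cxp; elim/poly_ind: P => [|P c cxP]; first by rewrite rmorph0; apply: commr0.
rewrite rmorphD rmorphM /= horner_algX horner_algC.
by apply: commrD; [apply: commrM | apply/commr_sym/comm_alg].
Qed.

Hypothesis connB : connected_falg B.

(* Fitting's lemma for a central element: if P(p) = 0 with P = Q X^k and Q(0) <> 0,
   the Bezout identity u Q + v X^(k+1) = 1 makes (u Q)(p) a central idempotent. *)
Lemma central_unit_or_unit_subr (p : B) : (forall x, GRing.comm p x) ->
  p \is a GRing.unit \/ (1 - p) \is a GRing.unit.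
Proof.
move=> cp; have [P nzP Pp0] := annihilating_poly p.
have [k [Q /implyP/(_ nzP) nQ0 defP]] := multiplicity_XsubC P 0.
rewrite subr0 in defP.
have QXp0 : horner_alg p (Q * 'X^(k.+1)) = 0.
  by rewrite exprSr mulrA -defP rmorphM /= Pp0 mul0r.
have copQX : coprimep Q 'X^(k.+1).
  by apply: coprimep_expr; rewrite -[X in coprimep _ X]subr0 -polyC0 coprimep_XsubC.
have [[u v] /= Bezout] := Bezout_eq1_coprimepP _ _ copQX.
pose e := horner_alg p (u * Q).
have ee : e * e = e.
  rewrite /e -rmorphM.
  have -> : u * Q * (u * Q) = u * Q * (u * Q + v * 'X^(k.+1)) - u * v * (Q * 'X^(k.+1)).
    by ring.
  by rewrite Bezout mulr1 rmorphB [X in _ - X]rmorphM /= QXp0 mulr0 subr0.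
have ce : forall x, e * x = x * e by move=> x; apply/commr_sym/comm_horner_alg/commr_sym.
have e_add : e + horner_alg p v * p ^+ k.+1 = 1.
  rewrite -(rmorph1 (horner_alg p)) -Bezout rmorphD [X in _ = _ + X]rmorphM.
  by rewrite rmorphXn /= horner_algX.
case: (connB ee ce) => [e0 | e1].
- left; apply/unitrP; exists (horner_alg p v * p ^+ k).
  have vp1 : horner_alg p v * p ^+ k * p = 1 by rewrite -mulrA -exprSr -e_add e0 add0r.
  by split=> //; rewrite -vp1 cp.
- right; have pk0 : p ^+ k.+1 = 0.
    move: QXp0; rewrite rmorphM rmorphXn /= horner_algX => Qp0.
    by rewrite -[p ^+ _]mul1r -e1 /e rmorphM -mulrA Qp0 mulr0.
  apply/unitrP; exists (\sum_(i < k.+1) p ^+ i).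
  have geom : (1 - p) * \sum_(i < k.+1) p ^+ i = 1.
    by rewrite -opprB mulNr -subrX1 pk0 sub0r opprK.
  split=> //; rewrite -[RHS]geom.
  by apply: commrB; [apply: commr1 | apply/commr_sym].
Qed.

End CentralLocal.

Section TensorModel.
Variables (K : fieldType) (B : falgType K).
Local Notation A := (dual B).
Local Notation Q := (dual A).
Local Notation dA := (@dA K B).
Local Notation basA := (@basA K B).
Local Notation TT := (@TT K B).
Local Notation crd := (@crd K B).
Local Notation uncrd := (@uncrd K B).
Local Notation tens := (@tens K B).
Local Notation lact := (@lact K B).
Local Notation ract := (@ract K B).
Local Notation NB := (@NB K B).

Lemma crd_is_linear : linear crd.
Proof. by move=> a x y; apply/rowP => i; rewrite !mxE linearP. Qed.
HB.instance Definition _ := GRing.isLinear.Build K A 'rV[K]_dA *:%R crd crd_is_linear.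

Lemma uncrd_is_linear : linear uncrd.
Proof.
move=> a r s; rewrite /uncrd scaler_sumr -big_split /=; apply: eq_bigr => i _.
by rewrite !mxE scalerDl scalerA.
Qed.
HB.instance Definition _ := GRing.isLinear.Build K 'rV[K]_dA A *:%R uncrd uncrd_is_linear.

Lemma uncrdK : cancel crd uncrd.
Proof.
by move=> x; rewrite /uncrd [RHS](coord_vbasis (memvf x)); apply: eq_bigr => i _; rewrite mxE.
Qed.

Lemma crd_lmx (a x : A) : crd x *m lmx a = crd (a * x).
Proof.
pose mul_a : {linear 'rV[K]_dA -> A} := a \*o uncrd.
by rewrite /lmx (mul_rV_lin1 (crd \o mul_a)) /= uncrdK.
Qed.

Lemma crd_rmx (c x : A) : crd x *m rmx c = crd (x * c).
Proof.
pose mulr_c : {linear 'rV[K]_dA -> A} := c \o* uncrd.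
by rewrite /rmx (mul_rV_lin1 (crd \o mulr_c)) /= uncrdK.
Qed.

Lemma lact_tens (a x y : A) : lact a (tens x y) = tens (a * x) y.
Proof. by rewrite /lact /tens mxvecK mulmxA -trmx_mul crd_lmx. Qed.

Lemma ract_tens (c x y : A) : ract c (tens x y) = tens x (y * c).
Proof. by rewrite /ract /tens mxvecK -mulmxA crd_rmx. Qed.

Lemma lact_is_linear a : linear (lact a).
Proof. by move=> k v w; rewrite /lact !linearP. Qed.
HB.instance Definition _ a := GRing.isLinear.Build K TT TT *:%R (lact a) (lact_is_linear a).

Lemma ract_is_linear c : linear (ract c).
Proof. by move=> k v w; rewrite /ract !linearP /= mulmxDl -scalemxAl linearP. Qed.
HB.instance Definition _ c := GRing.isLinear.Build K TT TT *:%R (ract c) (ract_is_linear c).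

Lemma tens_is_linear (x : A) : linear (tens x).
Proof. by move=> k y z; rewrite /tens linearP /= mulmxDr -scalemxAr linearP. Qed.
HB.instance Definition _ x := GRing.isLinear.Build K A TT *:%R (tens x) (tens_is_linear x).

Lemma tensl_is_linear (y : A) : linear (tens^~ y).
Proof.
by move=> k x z; rewrite /tens linearP /= linearD linearZ /= mulmxDl -scalemxAl linearP.
Qed.

Lemma vec_mx_tens (x y : A) (i j : 'I_dA) :
  vec_mx (tens x y) i j = coord basA i x * coord basA j y.
Proof. by rewrite /tens mxvecK !mxE big_ord1 !mxE. Qed.

Lemma tens_basA (i j : 'I_dA) : tens basA`_i basA`_j = mxvec (delta_mx i j).
Proof.
have crd_basA (k : 'I_dA) : crd basA`_k = delta_mx 0 k.
  have freeA : free basA := basis_free (vbasisP _).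
  by apply/rowP => l; rewrite !mxE coord_free // eqxx eq_sym.
by rewrite /tens !crd_basA trmx_delta mul_delta_mx.
Qed.

Lemma tens_expand v : v = \sum_i \sum_j vec_mx v i j *: tens basA`_i basA`_j.
Proof.
rewrite -{1}[v]vec_mxK {1}[vec_mx v]matrix_sum_delta !linear_sum; apply: eq_bigr => i _.
by rewrite linear_sum; apply: eq_bigr => j _; rewrite linearZ tens_basA.
Qed.

Lemma linear_tens_eq (W : lmodType K) (f g : {linear TT -> W}) :
  (forall x y : A, f (tens x y) = g (tens x y)) -> f =1 g.
Proof.
move=> fg v; rewrite [v]tens_expand !linear_sum; apply: eq_bigr => i _.
by rewrite !linear_sum; apply: eq_bigr => j _; rewrite !linearZ fg.
Qed.

Lemma linear_tens_mem (W : vectType K) (f : {linear TT -> W}) (U : {vspace W}) :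
  (forall x y : A, f (tens x y) \in U) -> forall v, f v \in U.
Proof.
move=> fU v; rewrite [v]tens_expand !linear_sum; apply: memv_suml => i _.
by rewrite !linear_sum; apply: memv_suml => j _; rewrite !linearZ memvZ.
Qed.

Lemma dual_lift_is_linear : linear (@dual_lift B).
Proof. by move=> k x y; apply: (congr2 pair); rewrite /= linearP. Qed.
HB.instance Definition _ :=
  GRing.isLinear.Build K A Q *:%R (@dual_lift B) dual_lift_is_linear.

Definition bal (x : A) (b : B) (y : A) : TT :=
  tens (x * dual_const b) y - tens x (dual_const b * y).

Lemma mem_linear_vbasis (V W : vectType K) (f : V -> W) (U : {vspace W}) :
  linear f -> (forall i : 'I_(\dim {:V}), f (vbasis {:V})`_i \in U) -> forall v, f v \in U.
Proof.
move=> lin_f fU v.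
pose F : {linear V -> W} := HB.pack f (GRing.isLinear.Build K V W *:%R f lin_f).
rewrite -[f v]/(F v) (coord_vbasis (memvf v)) linear_sum.
by apply: memv_suml => i _; rewrite linearZ memvZ.
Qed.

Lemma bal_NB (x : A) (b : B) (y : A) : bal x b y \in NB.
Proof.
have lin_x b' y' : linear (fun x => bal x b' y').
  by move=> k x1 x2; rewrite /bal mulrDl -scalerAl !tensl_is_linear scalerBr opprD addrACA.
have lin_b x' y' : linear (fun b => bal x' b y').
  move=> k b1 b2; rewrite /bal (linearP (@dual_const B)) mulrDr mulrDl -scalerAr -scalerAl.
  by rewrite tensl_is_linear tens_is_linear scalerBr opprD addrACA.
have lin_y x' b' : linear (bal x' b').
  by move=> k y1 y2; rewrite /bal mulrDr -scalerAr !tens_is_linear scalerBr opprD addrACA.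
move: x; apply: (mem_linear_vbasis (lin_x b y)) => i.
move: b; apply: (mem_linear_vbasis (lin_b _ y)) => l.
move: y; apply: (mem_linear_vbasis (lin_y _ _)) => j.
apply/memv_span/flatten_mapP; exists basA`_i; first by rewrite mem_nth ?size_tuple.
apply/allpairsP; exists ((vbasis {:B})`_l, basA`_j).
by rewrite !mem_nth ?size_tuple.
Qed.

(* [pi] is the isomorphism A (x)_B A ~= Q, x (x) y |-> (x, 0) * dual_lift y, with inverse
   [sigma] (u, w) = u (x) 1 + w (x) eps; its kernel is the balancing subspace NB. *)
Definition pi (v : TT) : Q :=
  \sum_i \sum_j vec_mx v i j *: (dual_const (basA`_i : A) * dual_lift (basA`_j : A)).

Lemma pi_is_linear : linear pi.
Proof.
move=> k v w; rewrite /pi scaler_sumr -big_split; apply: eq_bigr => i _ /=.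
rewrite scaler_sumr -big_split; apply: eq_bigr => j _ /=.
by rewrite linearP !mxE scalerDl scalerA.
Qed.
HB.instance Definition _ := GRing.isLinear.Build K TT Q *:%R pi pi_is_linear.

Lemma pi_tens (x y : A) : pi (tens x y) = dual_const x * dual_lift y.
Proof.
rewrite {2}(coord_vbasis (memvf x)) {2}(coord_vbasis (memvf y)).
rewrite !linear_sum mulr_suml; apply: eq_bigr => i _.
rewrite mulr_sumr; apply: eq_bigr => j _.
by rewrite !linearZ /= vec_mx_tens -scalerA scalerAr scalerAl.
Qed.

Lemma pi_bal (x : A) (b : B) (y : A) : pi (bal x b y) = 0.
Proof. by rewrite linearB /= !pi_tens dual_liftM dual_lift_const dual_constM mulrA subrr. Qed.

Lemma pi_NB (v : TT) : v \in NB -> pi v = 0.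
Proof.
have pi_gen w : w \in balanced_gens B -> pi w = 0.
  by move=> /flatten_mapP[x _ /allpairsP[[b y] [_ _ ->]]]; apply: (pi_bal x b y).
move=> NBv; rewrite (coord_span (X := in_tuple (balanced_gens B)) NBv) linear_sum.
rewrite big1 // => i _.
by rewrite linearZ /= pi_gen ?scaler0 // mem_nth ?size_tuple.
Qed.

Definition eps : A := (0, 1).
Definition sigma (q : Q) : TT := tens q.1 (1 : A) + tens q.2 eps.

Lemma sigma_is_linear : linear sigma.
Proof. by move=> k [u w] [u' w']; rewrite /sigma /= !tensl_is_linear scalerDr addrACA. Qed.
HB.instance Definition _ := GRing.isLinear.Build K Q TT *:%R sigma sigma_is_linear.

Lemma pi_sigma (q : Q) : pi (sigma q) = q.
Proof.
case: q => u w; rewrite linearD /= !pi_tens !dual_const_mulE.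
apply: (congr2 pair) => /=.
  by change (u * 1 + w * 0 = u); rewrite mulr1 mulr0 addr0.
by change (u * 0 + w * 1 = w); rewrite mulr1 mulr0 add0r.
Qed.

Lemma sigma_pi_NB (v : TT) : v - sigma (pi v) \in NB.
Proof.
pose f : {linear TT -> TT} := idfun \- (sigma \o pi).
apply: (linear_tens_mem (f := f)) => x y.
have y_split : y = dual_const y.1 * 1 + dual_const y.2 * eps.
  by case: y => y1 y2; apply: (congr2 pair); rewrite /= ?mulr0 ?mul0r ?mulr1 ?addr0 ?add0r.
rewrite /f /= pi_tens dual_const_mulE /sigma /= {1}y_split linearD /=.
by rewrite opprD addrACA; apply: rpredD; rewrite -opprB rpredN; apply: bal_NB.
Qed.

Lemma NB_pi (v : TT) : (v \in NB) = (pi v == 0).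
Proof.
apply/idP/eqP; first exact: pi_NB.
by move=> pi0; have := sigma_pi_NB v; rewrite pi0 linear0 subr0.
Qed.

Lemma pi_lact (a : A) (v : TT) : pi (lact a v) = dual_const a * pi v.
Proof.
apply: (linear_tens_eq (f := pi \o lact a) (g := dual_const a \*o pi)) => x y /=.
by rewrite lact_tens !pi_tens dual_constM mulrA.
Qed.

Lemma pi_ract (c : A) (v : TT) : pi (ract c v) = pi v * dual_lift c.
Proof.
apply: (linear_tens_eq (f := pi \o ract c) (g := dual_lift c \o* pi)) => x y /=.
by rewrite ract_tens !pi_tens dual_liftM mulrA.
Qed.

Definition t0 : TT := tens (1 : A) (1 : A).

Lemma lact_ract_t0 (x y : A) : lact x (ract y t0) = tens x y.
Proof. by rewrite ract_tens lact_tens mulr1 mul1r. Qed.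

Lemma pi_t0 : pi t0 = 1.
Proof. by rewrite pi_tens mul1r. Qed.

Lemma t0_notin_NB : t0 \notin NB.
Proof. by rewrite NB_pi pi_t0 oner_eq0. Qed.

Lemma endo_null_pi (h : 'End(TT)) : (forall v, pi (h v) = 0) -> endo_null h.
Proof. by move=> pi_h0; apply/subvP => _ /memv_imgP[v _ ->]; rewrite NB_pi pi_h0. Qed.

Section BimoduleEndomorphism.
Variable f : 'End(TT).
Hypothesis endo_f : bimod_endo f.

Lemma pi_endo_lact (a : A) (v : TT) : pi (f (lact a v)) = dual_const a * pi (f v).
Proof.
have [_ [fl _]] := endo_f.
by move: (fl a v); rewrite NB_pi linearB /= subr_eq0 pi_lact => /eqP.
Qed.

Lemma pi_endo_ract (c : A) (v : TT) : pi (f (ract c v)) = pi (f v) * dual_lift c.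
Proof.
have [_ [_ fr]] := endo_f.
by move: (fr c v); rewrite NB_pi linearB /= subr_eq0 pi_ract => /eqP.
Qed.

(* Balancing b (x) 1 = 1 (x) b makes f(1 (x) 1) commute with B, so its four components are
   central in B. *)
Lemma endo_t0_central (q : Q) : GRing.comm (pi (f t0)) q.
Proof.
set z := pi (f t0).
have zB b : GRing.comm z (dual_const (dual_const b)).
  have : f (lact (dual_const b) t0 - ract (dual_const b) t0) \in NB.
    have [fNB _] := endo_f; apply: (subvP fNB); apply: memv_img.
    have -> : lact (dual_const b) t0 - ract (dual_const b) t0 = bal 1 b 1.
      by rewrite /bal /t0 lact_tens ract_tens !mulr1 !mul1r.
    exact: bal_NB.
  rewrite NB_pi !linearB /= pi_endo_lact pi_endo_ract -/z subr_eq0 => /eqP.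
  by rewrite dual_lift_const.
have zB4 b : [/\ GRing.comm z.1.1 b, GRing.comm z.1.2 b, GRing.comm z.2.1 b
                & GRing.comm z.2.2 b].
  by have /dual_comm_const[/dual_comm_const[? ?] /dual_comm_const[? ?]] := zB b.
have -> : z = ((z.1.1, z.1.2), (z.2.1, z.2.2)) by rewrite /z; case: (pi _) => [[? ?] [? ?]].
by apply: dual_central; apply: dual_central => b; case: (zB4 b).
Qed.

Lemma pi_endo (v : TT) : pi (f v) = pi (f t0) * pi v.
Proof.
apply: (linear_tens_eq (f := pi \o f) (g := pi (f t0) \*o pi)) => x y /=.
rewrite -lact_ract_t0 pi_endo_lact pi_endo_ract lact_ract_t0 pi_tens.
by rewrite (endo_t0_central (dual_lift y)) mulrA endo_t0_central.
Qed.

End BimoduleEndomorphism.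

Definition mul_endo (w : Q) : 'End(TT) := linfun (sigma \o (w \*o pi)).

Lemma pi_mul_endo (w : Q) (v : TT) : pi (mul_endo w v) = w * pi v.
Proof. by rewrite lfunE /= pi_sigma. Qed.

Lemma mul_endo_bimod (w : Q) : (forall q, GRing.comm w q) -> bimod_endo (mul_endo w).
Proof.
move=> cw; split; [|split].
- apply/subvP => _ /memv_imgP[v NBv ->].
  by rewrite NB_pi in NBv; rewrite NB_pi pi_mul_endo (eqP NBv) mulr0.
- move=> a v; rewrite NB_pi linearB /= pi_mul_endo !pi_lact pi_mul_endo.
  by rewrite mulrA cw -mulrA subrr.
- move=> c v; rewrite NB_pi linearB /= pi_mul_endo !pi_ract pi_mul_endo.
  by rewrite mulrA subrr.
Qed.

Lemma endo_unit_of_unit (f : 'End(TT)) :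
  bimod_endo f -> (pi (f t0)).1.1 \is a GRing.unit -> endo_unit f.
Proof.
move=> endo_f /unitrP unit_z; set z := pi (f t0).
have [w [wz zw]] : exists w, w * z = 1 /\ z * w = 1 by do 2!apply: dual_invertible.
have cw q : GRing.comm w q.
  rewrite /GRing.comm -[w * q]mulr1 -zw mulrA -(mulrA w q).
  by rewrite -(endo_t0_central endo_f q) !mulrA wz mul1r.
exists (mul_endo w); split; first exact: mul_endo_bimod.
split; apply: endo_null_pi => v; rewrite add_lfunE opp_lfunE comp_lfunE id_lfunE linearB /=.
  by rewrite (pi_endo endo_f) pi_mul_endo mulrA zw mul1r subrr.
by rewrite pi_mul_endo (pi_endo endo_f) mulrA wz mul1r subrr.
Qed.

Lemma bimod_endo_subr (f : 'End(TT)) : bimod_endo f -> bimod_endo (\1%VF - f).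
Proof.
move=> endo_f; have [fNB _] := endo_f; split; [|split].
- apply/subvP => _ /memv_imgP[v NBv ->].
  by rewrite add_lfunE opp_lfunE id_lfunE rpredB // (subvP fNB) ?memv_img.
- move=> a v; rewrite NB_pi !add_lfunE !opp_lfunE !id_lfunE !linearB /=.
  by rewrite (pi_endo_lact endo_f) !pi_lact opprK addrACA subrr addNr addr0.
- move=> c v; rewrite NB_pi !add_lfunE !opp_lfunE !id_lfunE !linearB /=.
  by rewrite (pi_endo_ract endo_f) !pi_ract opprK addrACA subrr addNr addr0.
Qed.

Lemma tensor_End_local_of_connected : connected_falg B -> tensor_End_local B.
Proof.
move=> connB; split.
  move=> null1; move/negP: t0_notin_NB; apply; rewrite -(id_lfunE t0).
  by apply: (subvP null1); apply: memv_img; apply: memvf.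
move=> f endo_f; set z := pi (f t0).
have cz b : GRing.comm z.1.1 b.
  have := endo_t0_central endo_f (dual_const (dual_const b)).
  by case/dual_comm_const => /dual_comm_const[].
have [z_unit | zB_unit] := central_unit_or_unit_subr connB cz; [left | right].
  exact: endo_unit_of_unit.
apply: endo_unit_of_unit; first exact: bimod_endo_subr.
by rewrite add_lfunE opp_lfunE id_lfunE linearB /= pi_t0.
Qed.

End TensorModel.

Section Decomposition.
Variables (K : fieldType) (B : falgType K) (U W : {vspace TT B}).
Local Notation NB := (@NB K B).
Hypotheses (bimodU : sub_bimod U) (bimodW : sub_bimod W).
Hypotheses (UW_full : (U + W)%VS = fullv) (UW_cap : (U :&: W)%VS = NB).

Let P : 'End(TT B) := addv_pi2 W U.

Let P_id u : u \in U -> P u = u. Proof. exact: addv_pi2_id. Qed.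
Let P_mem v : P v \in U. Proof. exact: memv_pi2. Qed.
Let subr_P_mem v : v - P v \in W.
Proof.
have vWU : v \in (W + U)%VS by rewrite addvC UW_full memvf.
by rewrite -{1}(addv_pi1_pi2 vWU) addrK memv_pi1.
Qed.
Let cap_NB x : x \in U -> x \in W -> x \in NB.
Proof. by move=> xU xW; rewrite -UW_cap memv_cap xU xW. Qed.

Lemma proj_bimod_endo : bimod_endo P.
Proof.
have [NBU [lU rU]] := bimodU; have [NBW [lW rW]] := bimodW.
have P_comm (L : {linear TT B -> TT B}) : (forall v, v \in U -> L v \in U) ->
    (forall v, v \in W -> L v \in W) -> forall v, P (L v) - L (P v) \in NB.
  move=> LU LW v; rewrite -{1}(subrK (P v) v) [L _]linearD linearD /=.
  rewrite (P_id (LU _ (P_mem v))) addrK.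
  have LWv : L (v - P v) \in W by apply: LW.
  by apply: cap_NB; rewrite // -(subKr (L (v - P v)) (P _)) rpredB.
split; [|split].
- by apply/subvP => _ /memv_imgP[v NBv ->]; rewrite P_id // (subvP NBU).
- by move=> a; apply: P_comm => v; [apply: lU | apply: lW].
- by move=> c; apply: P_comm => v; [apply: rU | apply: rW].
Qed.

Lemma decomposition_trivial : tensor_End_local B -> U = NB \/ W = NB.
Proof.
have [[NBU _] [NBW _]] := (bimodU, bimodW).
have null_mem h v : endo_null h -> h v \in NB.
  by move=> /subvP; apply; apply: memv_img; apply: memvf.
case=> _ /(_ P proj_bimod_endo)[] [g [_ [/null_mem Pg _]]]; [right | left].
- apply/eqP; rewrite eqEsubv NBW andbT; apply/subvP => w wW; apply: cap_NB => //.
  have := Pg w; rewrite add_lfunE opp_lfunE comp_lfunE id_lfunE => Pgw.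
  by rewrite -(subKr (P (g w)) w) rpredB // (subvP NBU).
- apply/eqP; rewrite eqEsubv NBU andbT; apply/subvP => u uU; apply: cap_NB => //.
  have := Pg u; rewrite add_lfunE opp_lfunE comp_lfunE id_lfunE.
  rewrite add_lfunE opp_lfunE id_lfunE => Pgu.
  by rewrite -(subKr (g u - P (g u)) u) rpredB // (subvP NBW).
Qed.

End Decomposition.

Lemma tensor_indecomposable_of_local (K : fieldType) (B : falgType K) :
  tensor_End_local B -> tensor_indecomposable B.
Proof.
move=> locB; split; last by move=> U W bU bW UW_full UW_cap; apply: decomposition_trivial.
by apply/eqP => NB_full; case: locB => + _; apply; rewrite /endo_null NB_full subvf.
Qed.

Unset Implicit Arguments.
Theorem lemma55 (K : closedFieldType) (B : falgType K) :
  symmetric_falg B -> connected_falg B ->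
  tensor_indecomposable B /\ tensor_End_local B.
Proof.
move=> _ connB; have locB := tensor_End_local_of_connected connB.
by split; first exact: tensor_indecomposable_of_local.
Qed.
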